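(* Let $w\in\mathcal{M}_{n_x,n_y}$. The words $v$ occurring with nonzero coefficient in $Hw$ are precisely the words $v\in\mathcal{M}_{n_x,n_y}$ such that: (i) if $i\in E^x_v$ then $f^x_v(i)=f^x_w(i)-1$; (ii) if $i\notin E^x_v$ then $f^x_v(i)\ge f^x_w(i)$. The coefficient of such $v$ in $Hw$ is $(-1)^{|E^x_v|}$.
   Context: $\mathcal{M}_{n_x,n_y}$ is the set of words in letters $x,y$ with $n_x$ $x$'s and $n_y$ $y$'s; $\mathcal{F}_{n_x,n_y}$ its $\mathbb{Z}$-span. Number the $x$'s of a word $1,\dots,n_x$ from left to right. $f^x_w(i)$ is the number of $y$'s strictly to the left of the $i$-th $x$ in $w$. $E^x_v\subseteq\{1,\dots,n_x\}$ is the set of $i$ such that the $i$-th $x$ of $v$ is immediately followed by a $y$. Partial order: $w_0\le w_1$ iff $f^x_{w_0}(i)\le f^x_{w_1}(i)$ for all $i$. $\langle w_0|w_1\rangle=1$ if $w_0\le w_1$, else $0$. $H$ is the linear map on $\mathcal{F}_{n_x,n_y}$ with $\langle u|v\rangle=\langle v|Hu\rangle$ for all $u,v$. *)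

From HB Require Import structures.
From mathcomp Require Import all_boot all_order all_algebra.
Set Implicit Arguments. Unset Strict Implicit. Unset Printing Implicit Defensive.
Import Order.TTheory GRing.Theory Num.Theory.

(* A word in letters x, y is a boolean tuple: true = x, false = y.
   M_{nx,ny} = words of length nx+ny with exactly nx letters x. *)
Definition word (nx ny : nat) :=
  {t : (nx + ny).-tuple bool | count id t == nx}.

Section Words.
Variables nx ny : nat.

(* position (0-based) in w of the i-th x (i is 1-based, 1 <= i <= nx) *)
Definition xpos (w : word nx ny) (i : nat) : nat :=
  let s := val (val w) in
  nth 0 [seq k <- iota 0 (size s) | nth false s k] i.-1.

Definition fx (w : word nx ny) (i : nat) : nat :=
  let s := val (val w) in count negb (take (xpos w i) s).

Definition inEx (v : word nx ny) (i : nat) : bool :=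
  let s := val (val v) in
  ((xpos v i).+1 < size s)%N && ~~ nth false s (xpos v i).+1.

Definition Ex (v : word nx ny) : seq nat := [seq i <- iota 1 nx | inEx v i].

Definition wle (w0 w1 : word nx ny) : bool :=
  all (fun i => (fx w0 i <= fx w1 i)%N) (iota 1 nx).

Definition pairw (w0 w1 : word nx ny) : int := (wle w0 w1)%:R%R.

(* F_{nx,ny} : Z-span of the words, as finitely supported coefficient functions *)
Definition F := {ffun word nx ny -> int}.

Definition pairF (a b : F) : int :=
  \sum_(s : word nx ny) \sum_(t : word nx ny) (a s * b t * pairw s t)%R.

Definition basis (w : word nx ny) : F := [ffun z => (z == w)%:R%R].

End Words.

From HB Require Import structures.
From mathcomp Require Import all_boot all_order all_algebra.
From mathcomp Require Import zify.
Import Order.TTheory GRing.Theory Num.Theory.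

(* A word is determined by its y-profile g(0) <= ... <= g(nx-1) <= g(nx) = ny, where g(i) is
   the number of y's before the (i+1)-th x.  The order on words is the componentwise order of
   profiles, and i+1 is in E^x_v exactly when g_v ascends at i.  The matrix Z(s,t) = <s|t> is
   inverted by inclusion-exclusion: row t of Z^-1 is the signed sum, over the sets S of ascents
   of t, of the words whose profile is g_t + 1_S.  The hypothesis on H says that
   sum_t (Hw)_t <z|t> = <w|z> for every z, so the v-coefficient of Hw is the signed sum of
   the <w|v + 1_S>, which factors over i into
   [g_w(i) <= g_v(i)] - [i ascent of v] [g_w(i) <= g_v(i) + 1], i.e. into
   (-1)^[i ascent of v] times the indicator of condition (i) or (ii) at i. *)

Set Implicit Arguments.
Unset Strict Implicit.
Unset Printing Implicit Defensive.

Definition xpos_seq (s : seq bool) : seq nat := [seq k <- iota 0 (size s) | nth false s k].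

Fixpoint ycounts (s : seq bool) : seq nat :=
  match s with
  | [::] => [::]
  | true :: s' => 0 :: ycounts s'
  | false :: s' => map succn (ycounts s')
  end.

Fixpoint xy_flags (s : seq bool) : seq bool :=
  match s with
  | [::] => [::]
  | true :: s' => (if s' is false :: _ then true else false) :: xy_flags s'
  | false :: s' => xy_flags s'
  end.

Definition yprofile (s : seq bool) : seq nat := rcons (ycounts s) (count negb s).

Lemma xpos_seq_cons b s :
  xpos_seq (b :: s) = if b then 0 :: map succn (xpos_seq s) else map succn (xpos_seq s).
Proof. by rewrite /xpos_seq /= -add1n iotaDl filter_map; case: b. Qed.

Lemma size_ycounts s : size (ycounts s) = count id s.
Proof. by elim: s => [|[] s IH] //=; rewrite ?size_map IH. Qed.

Lemma size_xpos_seq s : size (xpos_seq s) = count id s.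
Proof. by elim: s => [|[] s IH]; rewrite ?xpos_seq_cons //= ?size_map IH. Qed.

Lemma size_yprofile s : size (yprofile s) = (count id s).+1.
Proof. by rewrite size_rcons size_ycounts. Qed.

Lemma map_xpos_seq_ycounts s :
  [seq count negb (take k s) | k <- xpos_seq s] = ycounts s.
Proof.
elim: s => [|[] s IH] //; rewrite xpos_seq_cons /= -map_comp -IH //.
by rewrite -map_comp.
Qed.

Lemma map_xpos_seq_flags s :
  [seq (k.+1 < size s) && ~~ nth false s k.+1 | k <- xpos_seq s] = xy_flags s.
Proof.
elim: s => [|[] s IH] //; rewrite xpos_seq_cons /= -map_comp -IH //.
by congr (_ :: _); case: s {IH} => [|[] ?].
Qed.

Lemma nth_xpos_seq_ycounts s j :
  count negb (take (nth 0 (xpos_seq s) j) s) = nth 0 (ycounts s) j.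
Proof.
rewrite -map_xpos_seq_ycounts; have [hj|hj] := ltnP j (size (xpos_seq s)).
  by rewrite (nth_map 0).
by rewrite !nth_default ?size_map // take0.
Qed.

Lemma nth_xpos_seq_flags s j : j < count id s ->
  ((nth 0 (xpos_seq s) j).+1 < size s) && ~~ nth false s (nth 0 (xpos_seq s) j).+1
  = nth false (xy_flags s) j.
Proof. by move=> hj; rewrite -map_xpos_seq_flags (nth_map 0) // size_xpos_seq. Qed.

Lemma yprofile_false s : yprofile (false :: s) = map succn (yprofile s).
Proof. by rewrite /yprofile /= map_rcons. Qed.

Lemma yprofile_true s : yprofile (true :: s) = 0 :: yprofile s.
Proof. by []. Qed.

Lemma nth_yprofile_step s j : j < count id s ->
  nth 0 (yprofile s) j <= nth 0 (yprofile s) j.+1 /\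
  nth false (xy_flags s) j = (nth 0 (yprofile s) j < nth 0 (yprofile s) j.+1).
Proof.
elim: s j => [|[] s IH] j hj //.
  rewrite yprofile_true; case: j hj => [|j] hj; last exact: IH.
  by case: s {IH hj} => [|[] s] //; rewrite yprofile_false /= (nth_map 0) ?size_yprofile.
have [mono asc] := IH j hj.
by rewrite yprofile_false !(nth_map 0) ?size_yprofile ?ltnS // ltnW.
Qed.

Lemma ycounts_inj s s' : size s = size s' -> ycounts s = ycounts s' -> s = s'.
Proof.
elim: s s' => [|a s IH] [|b s'] //= [hs].
case: a; case: b => /=.
- by case=> /IH ->.
- by case: (ycounts s').
- by case: (ycounts s).
- by move/(inj_map succn_inj)/IH ->.
Qed.

Fixpoint seq_of_ycounts (f : seq nat) (base top : nat) : seq bool :=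
  if f is a :: f' then nseq (a - base) false ++ true :: seq_of_ycounts f' a top
  else nseq (top - base) false.

Lemma ycounts_nseq_false k s : ycounts (nseq k false ++ s) = map (addn k) (ycounts s).
Proof. by elim: k => [|k IH] /=; [rewrite map_id_in | rewrite IH -map_comp]. Qed.

Lemma seq_of_ycountsK f base top :
  path leq base f -> all (leq^~ top) f -> base <= top ->
  [/\ size (seq_of_ycounts f base top) = size f + (top - base),
      count id (seq_of_ycounts f base top) = size f &
      ycounts (seq_of_ycounts f base top) = map (subn^~ base) f].
Proof.
elim: f base => [|a f IH] base /=.
  move=> _ _ _; rewrite size_nseq count_nseq mul0n -[nseq _ _]cats0 ycounts_nseq_false.
  by split.
move=> /andP[ba pf] /andP[atp af] bt; have [h1 h2 h3] := IH a pf af atp.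
split.
- by rewrite size_cat size_nseq /= h1; lia.
- by rewrite count_cat count_nseq mul0n /= h2.
rewrite ycounts_nseq_false /= h3 addn0 -map_comp; congr (_ :: _).
apply/eq_in_map => x xf /=.
have /= ax := allP (order_path_min leq_trans pf) x xf.
lia.
Qed.

Lemma nat_down_ind (P : nat -> Prop) n :
  P n -> (forall j, j < n -> P j.+1 -> P j) -> forall j, j <= n -> P j.
Proof.
move=> Pn step j; move: {2}(n - j) (erefl (n - j)) => k; elim: k j => [|k IH] j e hj.
  by have -> : j = n by lia.
by apply: step; [lia | apply: IH; lia].
Qed.

Section Profile.
Variables nx ny : nat.
Implicit Types u v w s t : word nx ny.

Definition wseq w : seq bool := val (val w).

Definition profile w (i : nat) : nat := nth 0 (yprofile (wseq w)) i.

Definition ascent w (i : nat) : bool := profile w i < profile w i.+1.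

Lemma count_wseq w : count id (wseq w) = nx.
Proof. exact: eqP (valP w). Qed.

Lemma size_wseq w : size (wseq w) = nx + ny.
Proof. exact: size_tuple. Qed.

Lemma count_negb_wseq w : count negb (wseq w) = ny.
Proof.
apply/eqP; rewrite -(eqn_add2r nx) -{1}(count_wseq w).
by rewrite addnC count_predC size_wseq addnC.
Qed.

Lemma fx_profile w i : i < nx -> fx w i.+1 = profile w i.
Proof.
move=> hi; rewrite /fx /xpos /= nth_xpos_seq_ycounts /profile /yprofile nth_rcons.
by rewrite size_ycounts count_wseq hi.
Qed.

Lemma profile_step w i : i < nx ->
  profile w i <= profile w i.+1 /\ nth false (xy_flags (wseq w)) i = ascent w i.
Proof. by move=> hi; apply: nth_yprofile_step; rewrite count_wseq. Qed.

Lemma inEx_ascent w i : i < nx -> inEx w i.+1 = ascent w i.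
Proof.
move=> hi; have [_ <-] := profile_step w hi.
by rewrite /inEx /xpos /= nth_xpos_seq_flags // count_wseq.
Qed.

Lemma profile_nx w : profile w nx = ny.
Proof.
by rewrite /profile /yprofile nth_rcons size_ycounts count_wseq ltnn eqxx count_negb_wseq.
Qed.

Lemma profile_homo w : {in [pred i | i <= nx] &, {homo profile w : i j / i <= j}}.
Proof.
apply: homo_leq_in => [//|j i k|i j _|i _].
- exact: leq_trans.
- by rewrite !inE => hj k /andP[_ /ltnW /leq_trans]; apply.
- by rewrite inE => hi; apply: (profile_step w hi).1.
Qed.

Lemma profile_le_ny w i : i <= nx -> profile w i <= ny.
Proof. by move=> hi; rewrite -(profile_nx w) profile_homo ?inE. Qed.

Lemma profile_inj u v : (forall i, i < nx -> profile u i = profile v i) -> u = v.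
Proof.
move=> h; have ycounts_eq : ycounts (wseq u) = ycounts (wseq v).
  apply: (@eq_from_nth _ 0); first by rewrite !size_ycounts !count_wseq.
  move=> i; rewrite size_ycounts count_wseq => hi.
  by have := h i hi; rewrite /profile /yprofile !nth_rcons !size_ycounts !count_wseq hi.
by do 2 apply: val_inj; apply: ycounts_inj; rewrite ?size_wseq.
Qed.

Lemma exists_word_profile (f : nat -> nat) :
  (forall i, i.+1 < nx -> f i <= f i.+1) -> (forall i, i < nx -> f i <= ny) ->
  exists u : word nx ny, forall i, i < nx -> profile u i = f i.
Proof.
move=> f_mono f_le; pose l := map f (iota 0 nx).
have l_path : path leq 0 l.
  have : sorted leq l.
    apply/(sortedP 0) => i; rewrite size_map size_iota => hi.
    rewrite !(nth_map 0) ?size_iota //; last exact: ltnW.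
    by rewrite !nth_iota //; [apply: f_mono | apply: ltnW].
  by case: l.
have l_le : all (leq^~ ny) l.
  by apply/allP => x /mapP[i]; rewrite mem_iota add0n => /andP[_ /f_le] + ->.
have [l_size l_count l_ycounts] := seq_of_ycountsK l_path l_le (leq0n ny).
have hsize : size (seq_of_ycounts l 0 ny) == nx + ny.
  by rewrite l_size size_map size_iota subn0.
have hcount : count id (Tuple hsize) == nx by rewrite /= l_count size_map size_iota.
exists (exist _ (Tuple hsize) hcount) => i hi.
rewrite /profile /wseq /= /yprofile nth_rcons l_ycounts size_map size_map size_iota hi.
by rewrite (nth_map 0) ?size_map ?size_iota // (nth_map 0) ?size_iota // nth_iota // subn0.
Qed.

Lemma profile_cmp_eq t s :
  [forall i : 'I_nx, if ascent t i then profile t i == profile s i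
                     else profile t i <= profile s i] = (t == s).
Proof.
apply/forallP/eqP => [cmp | <- i]; last by case: ascent.
have le_ts i : i < nx -> profile t i <= profile s i.
  by move=> hi; have := cmp (Ordinal hi); case: ascent => // /eqP ->.
have ge_ts : forall i, i <= nx -> profile s i <= profile t i.
  apply: nat_down_ind => [|i hi IH]; first by rewrite !profile_nx.
  have := cmp (Ordinal hi); rewrite /= /ascent; case: ltnP => [_ /eqP -> //| flat _].
  have [t_mono _] := profile_step t hi.
  have [s_mono _] := profile_step s hi.
  have -> : profile t i = profile t i.+1 by apply/eqP; rewrite eqn_leq t_mono.
  exact: leq_trans s_mono IH.
by apply: profile_inj => i hi; apply/eqP; rewrite eqn_leq le_ts // ge_ts // ltnW.
Qed.

End Profile.

Lemma all_iota1 n (p : pred nat) : all p (iota 1 n) = [forall i : 'I_n, p i.+1].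
Proof.
apply/allP/forallP => [h i | h x]; first by apply: h; rewrite mem_iota add1n !ltnS ltn_ord.
rewrite mem_iota add1n => /andP[x_gt0 x_lt]; have hx : x.-1 < n by lia.
by have := h (Ordinal hx); rewrite /= prednK.
Qed.

Local Open Scope ring_scope.

Lemma prod_nat_bool (R : comPzSemiRingType) (I : finType) (b : I -> bool) :
  \prod_(i : I) ((b i)%:R : R) = ([forall i, b i])%:R.
Proof.
have [/forallP all_b | /forallPn [i /negbTE not_bi]] := boolP [forall i, b i].
  by rewrite big1 // => i _; rewrite all_b.
by rewrite (bigD1 i) //= not_bi mul0r.
Qed.

Section Inversion.
Variables nx ny : nat.
Implicit Types (u v w s t : word nx ny) (S : {ffun 'I_nx -> bool}).

Lemma pairw_prod u v : pairw u v = \prod_(i < nx) ((profile u i <= profile v i)%N%:R).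
Proof.
rewrite prod_nat_bool /pairw /wle all_iota1.
by congr (nat_of_bool _)%:R; apply: eq_forallb => i; rewrite !fx_profile.
Qed.

Definition subset_weight t S : int :=
  \prod_(i < nx) ((S i ==> ascent t i)%:R * (-1) ^+ S i).

(* For S not contained in the ascent set of t the value is junk, but then the weight vanishes. *)
Definition shift t S : word nx ny :=
  odflt t [pick u | [forall i : 'I_nx, profile u i == (profile t i + S i)%N]].

Lemma profile_shift t S : [forall i, S i ==> ascent t i] ->
  forall i : 'I_nx, profile (shift t S) i = (profile t i + S i)%N.
Proof.
move/forallP => S_asc; pose f j := (profile t j + oapp S false (insub j))%N.
have f_le_next j : (j < nx)%N -> (f j <= profile t j.+1)%N.
  move=> hj; have := S_asc (Ordinal hj); rewrite /f insubT /=.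
  have [t_mono _] := profile_step t hj.
  by case: (S _) => /=; rewrite ?addn0 ?addn1.
have [u hu] : exists u : word nx ny, forall j, (j < nx)%N -> profile u j = f j.
  apply: exists_word_profile => j hj.
    exact: leq_trans (f_le_next j (ltnW hj)) (leq_addr _ _).
  exact: leq_trans (f_le_next j hj) (profile_le_ny t hj).
rewrite /shift; case: pickP => [u' /forallP hu' i | /(_ u) /forallP []]; first exact/eqP.
by move=> i; rewrite hu // /f valK.
Qed.

Lemma sum_subset_weight_prod t (c : 'I_nx -> nat -> int) :
  \sum_S subset_weight t S * \prod_(i < nx) c i (profile (shift t S) i)
  = \prod_(i < nx) (c i (profile t i) - (ascent t i)%:R * c i (profile t i).+1).
Proof.
have two_terms i : c i (profile t i) - (ascent t i)%:R * c i (profile t i).+1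
    = \sum_(b : bool) (b ==> ascent t i)%:R * (-1) ^+ b * c i (profile t i + b)%N.
  by rewrite big_bool /= addn1 addn0 expr1 expr0 mulrN1 mulNr !mul1r addrC.
rewrite (eq_bigr _ (fun i _ => two_terms i)) bigA_distr_bigA; apply: eq_bigr => S _.
have [S_asc | /forallPn [i /negbTE not_asc]] := boolP [forall i, S i ==> ascent t i].
  by rewrite /subset_weight -big_split /=; apply: eq_bigr => i _; rewrite profile_shift.
rewrite /subset_weight (bigD1 i) //= not_asc !mul0r.
by rewrite (bigD1 i) //= not_asc !mul0r.
Qed.

Lemma sum_subset_weight_pairw_shiftl t s :
  \sum_S subset_weight t S * pairw (shift t S) s = (t == s)%:R.
Proof.
under eq_bigr do rewrite pairw_prod.
rewrite (sum_subset_weight_prod t (fun i g => (g <= profile s i)%N%:R)).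
rewrite -profile_cmp_eq -prod_nat_bool.
apply: eq_bigr => i _; case: ascent => /=; last by rewrite mul0r subr0.
by rewrite mul1r; case: ltngtP.
Qed.

Definition admissible w t : bool :=
  [forall i : 'I_nx, if ascent t i then profile w i == (profile t i).+1
                     else profile w i <= profile t i]%N.

Lemma sum_subset_weight_pairw_shiftr w t :
  \sum_S subset_weight t S * pairw w (shift t S)
  = (-1) ^+ (\sum_(i < nx) ascent t i) * (admissible w t)%:R.
Proof.
under eq_bigr do rewrite pairw_prod.
rewrite (sum_subset_weight_prod t (fun i g => (profile w i <= g)%N%:R)).
rewrite -prod_nat_bool -prodrXr -big_split /=.
apply: eq_bigr => i _; case: ascent => /=; last by rewrite mul0r subr0 mul1r.
rewrite !mul1r expr1 mulN1r [in X in _ - X]leq_eqVlt ltnS.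
by case: eqP => [->|_] /=; rewrite ?ltnn ?sub0r ?subrr ?oppr0.
Qed.

Lemma subset_weight_inversion (h c : word nx ny -> int) :
  (forall z, \sum_t h t * pairw z t = c z) ->
  forall t, h t = \sum_S subset_weight t S * c (shift t S).
Proof.
move=> hc t; transitivity (\sum_s h s * (t == s)%:R).
  rewrite (bigD1 t) //= eqxx mulr1 big1 ?addr0 // => s.
  by rewrite eq_sym => /negbTE ->; rewrite mulr0.
under eq_bigr do rewrite -sum_subset_weight_pairw_shiftl mulr_sumr.
rewrite exchange_big; apply: eq_bigr => S _.
by rewrite -hc mulr_sumr; apply: eq_bigr => s _; rewrite mulrCA.
Qed.

End Inversion.

Lemma size_Ex nx ny (v : word nx ny) : size (Ex v) = (\sum_(i < nx) ascent v i)%N.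
Proof.
rewrite /Ex size_filter -sum1_count big_mkcond.
rewrite -[iota 1 nx]/(iota (1 + 0) nx) iotaDl big_map.
rewrite -(big_mkord xpredT (fun i => nat_of_bool (ascent v i))) /index_iota subn0.
apply: eq_big_seq => i; rewrite mem_iota => /andP[_ hi].
by rewrite add1n inEx_ascent //; case: ascent.
Qed.

Lemma admissibleP nx ny (w v : word nx ny) :
  reflect (forall i, (1 <= i <= nx)%N ->
             (inEx v i -> (fx v i)%:Z = (fx w i)%:Z - 1) /\
             (~~ inEx v i -> (fx w i <= fx v i)%N))
          (admissible w v).
Proof.
apply: (iffP forallP) => [adm [|i] //= hi | cond i].
  have := adm (Ordinal hi); rewrite /= inEx_ascent // !fx_profile //.
  by case: ascent => // /eqP ->; split => //; rewrite -addn1 PoszD addrK.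
have := cond i.+1; rewrite ltn_ord inEx_ascent // !fx_profile // => /(_ isT).
case: ascent => -[asc_eq flat_le]; last exact: flat_le.
by apply/eqP; have := asc_eq isT; lia.
Qed.

Lemma pairF_basisl nx ny (z : word nx ny) (b : F nx ny) :
  pairF (basis z) b = \sum_t b t * pairw z t.
Proof.
rewrite /pairF (bigD1 z) //= [X in _ + X]big1 ?addr0 => [|s /negbTE zs]; last first.
  by apply: big1 => t _; rewrite ffunE zs !mul0r.
by apply: eq_bigr => t _; rewrite ffunE eqxx mul1r.
Qed.

Lemma pairF_basis nx ny (u v : word nx ny) : pairF (basis u) (basis v) = pairw u v.
Proof.
rewrite pairF_basisl (bigD1 v) //= big1 ?addr0 => [|t /negbTE vt].
  by rewrite ffunE eqxx mul1r.
by rewrite ffunE vt mul0r.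
Qed.

Unset Implicit Arguments.

Theorem mainTheorem8 (nx ny : nat)
  (H : {additive F nx ny -> F nx ny})
  (hH : forall u v : F nx ny, pairF u v = pairF v (H u))
  (w : word nx ny) :
  forall v : word nx ny,
    let cond :=
      forall i : nat, (1 <= i <= nx)%N ->
        (inEx v i -> (fx v i)%:Z = (fx w i)%:Z - 1) /\
        (~~ inEx v i -> (fx w i <= fx v i)%N) in
    (H (basis w) v != 0 <-> cond) /\
    (cond -> H (basis w) v = (-1) ^+ size (Ex v)).
Proof.
move=> v cond.
have -> : H (basis w) v = (-1) ^+ size (Ex v) * (admissible w v)%:R.
  rewrite size_Ex -sum_subset_weight_pairw_shiftr; apply: subset_weight_inversion => z.
  by rewrite -pairF_basisl -hH pairF_basis.
by case: (admissibleP w v); rewrite ?mulr1 ?mulr0 ?signr_eq0 ?eqxx.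
Qed.
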